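(* Consider the MPVC in $\mathbb R^2$: minimize $|x_1|+|x_2|$ subject to $g(x)=x_1+x_2\le0$, $H(x)=x_1\ge0$, $G(x)H(x)=x_1(x_1^2-x_2^2)\le0$ where $G(x)=x_1^2-x_2^2$ (so $m=1$, $l=0$, $q=1$). At $x^\ast=(0,0)$, MPVC-generalized quasinormality fails, but MPVC-ACQ holds. Moreover, the penalty function $P_\alpha$ is exact at $x^\ast$. Consequently, MPVC-ACQ does not imply MPVC-generalized quasinormality, and exactness of $P_\alpha$ at a local minimizer does not imply MPVC-generalized quasinormality there.
   Context: MPVC setup: for continuously differentiable $g_i,h_j,G_i,H_i:\mathbb R^n\to\mathbb R$ the constraints are $g_i(x)\le0$ $(i\le m)$, $h_j(x)=0$ $(j\le l)$, $H_i(x)\ge0$, $G_i(x)H_i(x)\le0$ $(i\le q)$, with feasible set $\mathcal C$. For $x^\ast\in\mathcal C$: $I_g=\{i:g_i(x^\ast)=0\}$, $I_+=\{i:H_i(x^\ast)>0\}$, $I_{+0}=\{i:H_i(x^\ast)>0,G_i(x^\ast)=0\}$, $I_{+-}=\{i:H_i(x^\ast)>0,G_i(x^\ast)<0\}$, $I_{0+}=\{i:H_i(x^\ast)=0,G_i(x^\ast)>0\}$, $I_{0-}=\{i:H_i(x^\ast)=0,G_i(x^\ast)<0\}$, $I_{00}=\{i:H_i(x^\ast)=0,G_i(x^\ast)=0\}$. Admissible multipliers: $(\lambda,\mu,\eta^G,\eta^H)\in\mathbb R^m\times\mathbb R^l\times\mathbb R^q\times\mathbb R^q$ with (i) $\sum_i\lambda_i\nabla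 g_i(x^\ast)+\sum_j\mu_j\nabla h_j(x^\ast)+\sum_i\eta^G_i\nabla G_i(x^\ast)-\sum_i\eta^H_i\nabla H_i(x^\ast)=0$; (ii) $\lambda_i\ge0$ for $i\in I_g$, $\lambda_i=0$ for $i\notin I_g$; $\eta^G_i=0$ for $i\in I_{+-}\cup I_{0-}\cup I_{0+}$, $\eta^G_i\ge0$ for $i\in I_{+0}\cup I_{00}$; $\eta^H_i=0$ for $i\in I_+$, $\eta^H_i\ge0$ for $i\in I_{0-}$, $\eta^H_i$ free for $i\in I_{0+}$; $\eta^H_i\eta^G_i=0$ for $i\in I_{00}$. MPVC-generalized quasinormality holds at $x^\ast$ if there is no nonzero admissible multiplier for which there is a sequence $x^k\to x^\ast$ such that for all $k$: $\lambda_i>0\Rightarrow\lambda_ig_i(x^k)>0$; $\mu_j\neq0\Rightarrow\mu_jh_j(x^k)>0$; $\eta^H_i\ne0\Rightarrow\eta^H_iH_i(x^k)<0$; $\eta^G_i>0\Rightarrow\eta^G_iG_i(x^k)>0$. $T_{\mathcal C}(x^\ast)$ denotes the Bouligand tangent cone of $\mathcal C$ at $x^\ast$. The MPVC-linearized cone is $L_{MPVC}(x^\ast)=\{d:\nabla g_i(x^\ast)^Td\le0\ (i\in I_g);\ \nabla h_j(x^\ast)^Td=0\ (\forall j);\ \nabla H_i(x^\ast)^Td=0\ (i\in I_{0+});\ \nabla H_i(x^\ast)^Td\ge0\ (i\in I_{00}\cup I_{0-});\ \nabla G_i(x^\ast)^Td\le0\ (i\in I_{+0});\ (\nabla G_i(x^\ast)^Td)(\nabla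 H_i(x^\ast)^Td)\le0\ (i\in I_{00})\}$; MPVC-ACQ holds at $x^\ast$ if $T_{\mathcal C}(x^\ast)=L_{MPVC}(x^\ast)$. Penalty function: $P_\alpha(x)=f(x)+\alpha\big[\sum_i\max\{0,g_i(x)\}+\sum_j|h_j(x)|+\sum_i\max\{0,-H_i(x),\min\{G_i(x),H_i(x)\}\}\big]$ for $\alpha\ge0$; $P_\alpha$ is exact at $x^\ast$ if there is $\bar\alpha\ge0$ such that $x^\ast$ is a local minimizer of $P_\alpha$ on $\mathbb R^n$ for all $\alpha\ge\bar\alpha$. *)

From Stdlib Require Import Reals Lra.
Open Scope R_scope.

(* Points of R^n are represented as functions nat -> R; only the
   coordinates 0..n-1 are meaningful. *)
Definition vec := nat -> R.

Fixpoint sumR (n : nat) (f : nat -> R) : R :=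
  match n with O => 0 | S k => sumR k f + f k end.

Definition dot (n : nat) (u v : vec) : R := sumR n (fun i => u i * v i).
Definition vnorm (n : nat) (v : vec) : R := sqrt (dot n v v).
Definition vsub (u v : vec) : vec := fun i => u i - v i.
Definition vadd (u v : vec) : vec := fun i => u i + v i.
Definition vscale (t : R) (v : vec) : vec := fun i => t * v i.

Record MPVC := mkMPVC {
  dim : nat; nm : nat; nl : nat; nq : nat;
  fobj : vec -> R;
  gf : nat -> vec -> R; hf : nat -> vec -> R;
  Gf : nat -> vec -> R; Hf : nat -> vec -> R;
  dg : nat -> vec -> vec; dh : nat -> vec -> vec;
  dG : nat -> vec -> vec; dH : nat -> vec -> vec }.

Definition feasible (P : MPVC) (x : vec) : Prop :=
  (forall i, (i < nm P)%nat -> gf P i x <= 0) /\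
  (forall j, (j < nl P)%nat -> hf P j x = 0) /\
  (forall i, (i < nq P)%nat -> Hf P i x >= 0 /\ Gf P i x * Hf P i x <= 0).

Definition local_min_on_C (P : MPVC) (xs : vec) : Prop :=
  feasible P xs /\
  exists eps, eps > 0 /\ forall x, feasible P x ->
    vnorm (dim P) (vsub x xs) < eps -> fobj P xs <= fobj P x.

Definition Ig P xs i := (i < nm P)%nat /\ gf P i xs = 0.
Definition Iplus P xs i := (i < nq P)%nat /\ Hf P i xs > 0.
Definition Ip0 P xs i := (i < nq P)%nat /\ Hf P i xs > 0 /\ Gf P i xs = 0.
Definition Ipm P xs i := (i < nq P)%nat /\ Hf P i xs > 0 /\ Gf P i xs < 0.
Definition I0p P xs i := (i < nq P)%nat /\ Hf P i xs = 0 /\ Gf P i xs > 0.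
Definition I0m P xs i := (i < nq P)%nat /\ Hf P i xs = 0 /\ Gf P i xs < 0.
Definition I00 P xs i := (i < nq P)%nat /\ Hf P i xs = 0 /\ Gf P i xs = 0.

Definition admissible (P : MPVC) (xs : vec)
    (lam mu etaG etaH : nat -> R) : Prop :=
  (forall k, (k < dim P)%nat ->
     sumR (nm P) (fun i => lam i * dg P i xs k)
   + sumR (nl P) (fun j => mu j * dh P j xs k)
   + sumR (nq P) (fun i => etaG i * dG P i xs k)
   - sumR (nq P) (fun i => etaH i * dH P i xs k) = 0) /\
  (forall i, (i < nm P)%nat -> Ig P xs i -> lam i >= 0) /\
  (forall i, (i < nm P)%nat -> ~ Ig P xs i -> lam i = 0) /\
  (forall i, (Ipm P xs i \/ I0m P xs i \/ I0p P xs i) -> etaG i = 0) /\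
  (forall i, (Ip0 P xs i \/ I00 P xs i) -> etaG i >= 0) /\
  (forall i, Iplus P xs i -> etaH i = 0) /\
  (forall i, I0m P xs i -> etaH i >= 0) /\
  (forall i, I00 P xs i -> etaH i * etaG i = 0).

Definition nonzero_mult (P : MPVC) (lam mu etaG etaH : nat -> R) : Prop :=
  (exists i, (i < nm P)%nat /\ lam i <> 0) \/
  (exists j, (j < nl P)%nat /\ mu j <> 0) \/
  (exists i, (i < nq P)%nat /\ etaG i <> 0) \/
  (exists i, (i < nq P)%nat /\ etaH i <> 0).

Definition MPVC_GQN (P : MPVC) (xs : vec) : Prop :=
  ~ exists lam mu etaG etaH,
      admissible P xs lam mu etaG etaH /\ nonzero_mult P lam mu etaG etaH /\
      exists xk : nat -> vec,
        Un_cv (fun k => vnorm (dim P) (vsub (xk k) xs)) 0 /\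
        forall k,
          (forall i, (i < nm P)%nat -> lam i > 0 -> lam i * gf P i (xk k) > 0) /\
          (forall j, (j < nl P)%nat -> mu j <> 0 -> mu j * hf P j (xk k) > 0) /\
          (forall i, (i < nq P)%nat -> etaH i <> 0 -> etaH i * Hf P i (xk k) < 0) /\
          (forall i, (i < nq P)%nat -> etaG i > 0 -> etaG i * Gf P i (xk k) > 0).

Definition tangent_cone (P : MPVC) (xs : vec) (d : vec) : Prop :=
  exists (t : nat -> R) (dk : nat -> vec),
    (forall k, t k > 0) /\ Un_cv t 0 /\
    Un_cv (fun k => vnorm (dim P) (vsub (dk k) d)) 0 /\
    forall k, feasible P (vadd xs (vscale (t k) (dk k))).

Definition L_MPVC (P : MPVC) (xs : vec) (d : vec) : Prop :=
  (forall i, Ig P xs i -> dot (dim P) (dg P i xs) d <= 0) /\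
  (forall j, (j < nl P)%nat -> dot (dim P) (dh P j xs) d = 0) /\
  (forall i, I0p P xs i -> dot (dim P) (dH P i xs) d = 0) /\
  (forall i, (I00 P xs i \/ I0m P xs i) -> dot (dim P) (dH P i xs) d >= 0) /\
  (forall i, Ip0 P xs i -> dot (dim P) (dG P i xs) d <= 0) /\
  (forall i, I00 P xs i ->
     dot (dim P) (dG P i xs) d * dot (dim P) (dH P i xs) d <= 0).

Definition MPVC_ACQ (P : MPVC) (xs : vec) : Prop :=
  forall d, tangent_cone P xs d <-> L_MPVC P xs d.

Definition penalty (P : MPVC) (alpha : R) (x : vec) : R :=
  fobj P x + alpha *
   (sumR (nm P) (fun i => Rmax 0 (gf P i x))
  + sumR (nl P) (fun j => Rabs (hf P j x))
  + sumR (nq P) (fun i => Rmax 0 (Rmax (- Hf P i x) (Rmin (Gf P i x) (Hf P i x))))).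

Definition penalty_exact (P : MPVC) (xs : vec) : Prop :=
  exists abar, abar >= 0 /\ forall alpha, alpha >= abar ->
    exists eps, eps > 0 /\ forall x,
      vnorm (dim P) (vsub x xs) < eps -> penalty P alpha xs <= penalty P alpha x.

(* The concrete example in R^2 (coordinates x 0, x 1). *)
Definition mkv2 (a b : R) : vec :=
  fun k => match k with O => a | S O => b | _ => 0 end.

Definition example : MPVC := {|
  dim := 2; nm := 1; nl := 0; nq := 1;
  fobj := fun x => Rabs (x 0%nat) + Rabs (x 1%nat);
  gf := fun _ x => x 0%nat + x 1%nat;
  hf := fun _ _ => 0;
  Gf := fun _ x => x 0%nat ^ 2 - x 1%nat ^ 2;
  Hf := fun _ x => x 0%nat;
  dg := fun _ _ => mkv2 1 1;
  dh := fun _ _ => mkv2 0 0;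
  dG := fun _ x => mkv2 (2 * x 0%nat) (-2 * x 1%nat);
  dH := fun _ _ => mkv2 1 0 |}.

Definition xstar : vec := mkv2 0 0.

From Stdlib Require Import Reals Lra Lia.
Open Scope R_scope.

(* The feasible set is the closed wedge W = {x_1 >= 0, x_1 + x_2 <= 0}: there
   x_2 <= -x_1 <= 0 forces x_1^2 <= x_2^2, so the vanishing constraint is
   redundant.  As grad G vanishes at x*, the MPVC-linearized cone is W as
   well, and W is also the tangent cone of W at its apex; this is ACQ.  The
   objective is nonnegative on all of R^2 and vanishes at x*, so x* minimizes
   it on C and minimizes every P_alpha, alpha >= 0.  Quasinormality fails
   because, again as grad G vanishes at x*, eta^G = 1 (all other multipliers 0)
   is admissible, while G = x_1^2 > 0 along the positive x_1-axis. *)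

Lemma sumR_ext (n : nat) (f g : nat -> R) :
  (forall i, (i < n)%nat -> f i = g i) -> sumR n f = sumR n g.
Proof.
  induction n as [|n IH]; intros Hfg; simpl; [reflexivity|].
  rewrite IH, Hfg; [reflexivity|lia|intros; apply Hfg; lia].
Qed.

Lemma sumR_ge0 (n : nat) (f : nat -> R) :
  (forall i, (i < n)%nat -> 0 <= f i) -> 0 <= sumR n f.
Proof.
  induction n as [|n IH]; intros Hf; simpl; [lra|].
  assert (0 <= sumR n f) by (apply IH; intros; apply Hf; lia).
  assert (0 <= f n) by (apply Hf; lia).
  lra.
Qed.

Lemma sumR_eq0 (n : nat) (f : nat -> R) :
  (forall i, (i < n)%nat -> f i = 0) -> sumR n f = 0.
Proof.
  intros Hf. rewrite (sumR_ext n f (fun _ => 0)) by exact Hf.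
  clear Hf. induction n as [|n IH]; simpl; [reflexivity|]. rewrite IH. ring.
Qed.

Lemma sqr_le_dot (n : nat) (v : vec) (i : nat) :
  (i < n)%nat -> v i * v i <= dot n v v.
Proof.
  unfold dot. induction n as [|n IH]; intros Hi; [lia|]. simpl.
  assert (0 <= sumR n (fun j => v j * v j))
    by (apply sumR_ge0; intros; apply Rle_0_sqr).
  destruct (Nat.eq_dec i n) as [->|Hne]; [lra|].
  assert (v i * v i <= sumR n (fun j => v j * v j)) by (apply IH; lia).
  pose proof (Rle_0_sqr (v n)). unfold Rsqr in *. lra.
Qed.

Lemma Rabs_le_vnorm (n : nat) (v : vec) (i : nat) :
  (i < n)%nat -> Rabs (v i) <= vnorm n v.
Proof.
  intros Hi. rewrite <- sqrt_Rsqr_abs. apply sqrt_le_1_alt.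
  exact (sqr_le_dot n v i Hi).
Qed.

Lemma vnorm_vsub_self (n : nat) (v : vec) : vnorm n (vsub v v) = 0.
Proof.
  unfold vnorm, dot, vsub.
  rewrite sumR_eq0 by (intros; ring). apply sqrt_0.
Qed.

Lemma Un_cv_const (c : R) : Un_cv (fun _ => c) c.
Proof.
  intros eps Heps. exists O. intros k _. unfold Rdist.
  rewrite Rminus_diag, Rabs_R0. lra.
Qed.

Lemma Un_cv_coord (n : nat) (u : nat -> vec) (v : vec) (i : nat) :
  (i < n)%nat -> Un_cv (fun k => vnorm n (vsub (u k) v)) 0 ->
  Un_cv (fun k => u k i) (v i).
Proof.
  intros Hi Hcv eps Heps. destruct (Hcv eps Heps) as [N HN].
  exists N. intros k Hk. specialize (HN k Hk). unfold Rdist in *.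
  rewrite Rminus_0_r, Rabs_pos_eq in HN by apply sqrt_pos.
  pose proof (Rabs_le_vnorm n (vsub (u k) v) i Hi) as Hle.
  unfold vsub in *. lra.
Qed.

Lemma penalty_ge_fobj (P : MPVC) (alpha : R) (x : vec) :
  0 <= alpha -> fobj P x <= penalty P alpha x.
Proof.
  intros Ha. unfold penalty.
  assert (0 <= sumR (nm P) (fun i => Rmax 0 (gf P i x)))
    by (apply sumR_ge0; intros; apply Rmax_l).
  assert (0 <= sumR (nl P) (fun j => Rabs (hf P j x)))
    by (apply sumR_ge0; intros; apply Rabs_pos).
  assert (0 <= sumR (nq P)
     (fun i => Rmax 0 (Rmax (- Hf P i x) (Rmin (Gf P i x) (Hf P i x)))))
    by (apply sumR_ge0; intros; apply Rmax_l).
  nra.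
Qed.

Lemma penalty_feasible (P : MPVC) (alpha : R) (x : vec) :
  feasible P x -> penalty P alpha x = fobj P x.
Proof.
  intros [Hg [Hh Hq]]. unfold penalty.
  rewrite (sumR_eq0 (nm P)) by (intros i Hi; apply Rmax_left, Hg, Hi).
  rewrite (sumR_eq0 (nl P)) by (intros j Hj; rewrite Hh by exact Hj; apply Rabs_R0).
  rewrite (sumR_eq0 (nq P)); [ring|].
  intros i Hi. destruct (Hq i Hi) as [HH HGH].
  assert (Rmin (Gf P i x) (Hf P i x) <= 0).
  { destruct (Rle_lt_or_eq_dec 0 (Hf P i x)) as [Hpos|<-]; [lra| |].
    - assert (Gf P i x <= 0) by nra. pose proof (Rmin_l (Gf P i x) (Hf P i x)). lra.
    - apply Rmin_r. }
  apply Rmax_left, Rmax_lub; lra.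
Qed.

Section GlobalMinimizer.

Variables (P : MPVC) (xs : vec).
Hypothesis xs_feasible : feasible P xs.
Hypothesis xs_min : forall x, fobj P xs <= fobj P x.

Lemma local_min_on_C_of_global_min : local_min_on_C P xs.
Proof. split; [exact xs_feasible|]. exists 1. split; [lra|]. auto. Qed.

Lemma penalty_exact_of_global_min : penalty_exact P xs.
Proof.
  exists 0. split; [lra|]. intros alpha Ha. exists 1. split; [lra|]. intros x _.
  rewrite penalty_feasible by exact xs_feasible.
  pose proof (penalty_ge_fobj P alpha x). specialize (xs_min x). lra.
Qed.

End GlobalMinimizer.

Section TangentConeOfCone.

Variables (P : MPVC) (xs : vec) (K : vec -> Prop).
Hypothesis feasible_ray :
  forall t v, t > 0 -> (feasible P (vadd xs (vscale t v)) <-> K v).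
Hypothesis K_closed : forall (u : nat -> vec) (v : vec),
  Un_cv (fun k => vnorm (dim P) (vsub (u k) v)) 0 -> (forall k, K (u k)) -> K v.

Lemma tangent_cone_cone (d : vec) : tangent_cone P xs d <-> K d.
Proof.
  split.
  - intros (t & dk & Ht & _ & Hdk & Hfeas).
    apply (K_closed dk); [exact Hdk|]. intros k. apply (feasible_ray (t k)); auto.
  - intros Hd. exists (fun k => pos (RinvN k)), (fun _ => d).
    split; [intros k; apply RinvN_pos|]. split; [exact RinvN_cv|]. split.
    + eapply Un_cv_ext; [|apply Un_cv_const].
      intros k. symmetry. apply vnorm_vsub_self.
    + intros k. apply feasible_ray; [apply RinvN_pos|exact Hd].
Qed.

End TangentConeOfCone.

Definition wedge (v : vec) : Prop := 0 <= v 0%nat /\ v 0%nat + v 1%nat <= 0.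

Lemma example_feasible_iff (x : vec) : feasible example x <-> wedge x.
Proof.
  unfold feasible, wedge; simpl. split.
  - intros [Hg [_ Hq]]. specialize (Hg O ltac:(lia)). specialize (Hq O ltac:(lia)).
    lra.
  - intros [H0 H01].
    assert (x 0%nat * x 0%nat <= x 1%nat * x 1%nat) by nra.
    repeat split; intros; try lia; nra.
Qed.

Lemma example_feasible_ray (t : R) (v : vec) :
  t > 0 -> (feasible example (vadd xstar (vscale t v)) <-> wedge v).
Proof.
  intros Ht. rewrite example_feasible_iff. unfold wedge, vadd, vscale, xstar; simpl.
  split; intros [H0 H01]; split; nra.
Qed.

Lemma wedge_closed (u : nat -> vec) (v : vec) :
  Un_cv (fun k => vnorm 2 (vsub (u k) v)) 0 -> (forall k, wedge (u k)) -> wedge v.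
Proof.
  intros Hcv Hu.
  pose proof (Un_cv_coord 2 u v 0 ltac:(lia) Hcv) as H0.
  pose proof (Un_cv_coord 2 u v 1 ltac:(lia) Hcv) as H1.
  split.
  - apply (Rle_cv_lim (Un := fun _ => 0) (Vn := fun k => u k 0%nat));
      [intros k; apply Hu|apply Un_cv_const|exact H0].
  - apply (Rle_cv_lim (Vn := fun _ => 0) (Un := fun k => u k 0%nat + u k 1%nat));
      [intros k; apply Hu|apply CV_plus; assumption|apply Un_cv_const].
Qed.

Lemma example_L_MPVC_iff (d : vec) : L_MPVC example xstar d <-> wedge d.
Proof.
  unfold L_MPVC, Ig, I0p, I00, I0m, Ip0, wedge; simpl; unfold xstar, dot; simpl.
  split.
  - intros [Hg [_ [_ [HH _]]]].
    specialize (Hg O ltac:(split; [lia|lra])).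
    specialize (HH O ltac:(left; split; [lia|split; lra])).
    lra.
  - intros [H0 H01]. repeat split; intros; try lia; lra.
Qed.

Lemma example_ACQ : MPVC_ACQ example xstar.
Proof.
  intros d. rewrite example_L_MPVC_iff.
  apply tangent_cone_cone; [exact example_feasible_ray|exact wedge_closed].
Qed.

Lemma example_admissible_etaG :
  admissible example xstar (fun _ => 0) (fun _ => 0) (fun _ => 1) (fun _ => 0).
Proof.
  unfold admissible, Ig, Ipm, I0m, I0p, Ip0, I00, Iplus; simpl; unfold xstar; simpl.
  repeat split; intros; try lra.
  destruct k as [|[|k]]; simpl; lra.
Qed.

Lemma example_not_GQN : ~ MPVC_GQN example xstar.
Proof.
  intros HG. apply HG.
  exists (fun _ => 0), (fun _ => 0), (fun _ => 1), (fun _ => 0).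
  split; [exact example_admissible_etaG|].
  split; [right; right; left; exists O; simpl; split; [lia|lra]|].
  exists (fun k => mkv2 (RinvN k) 0). split.
  - eapply Un_cv_ext; [|exact RinvN_cv]. intros k.
    pose proof (RinvN_pos k : 0 < RinvN k) as Ht. set (t := pos (RinvN k)) in *.
    unfold vnorm, dot, vsub, xstar; simpl.
    replace (0 + (t - 0) * (t - 0) + (0 - 0) * (0 - 0))
      with (Rsqr t) by (unfold Rsqr; ring).
    symmetry. apply sqrt_Rsqr. lra.
  - intros k. pose proof (RinvN_pos k : 0 < RinvN k) as Ht.
    set (t := pos (RinvN k)) in *. simpl.
    repeat split; intros; try lra; try lia; nra.
Qed.

Lemma example_fobj_min (x : vec) : fobj example xstar <= fobj example x.
Proof.
  simpl. unfold xstar; simpl. rewrite Rabs_R0.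
  pose proof (Rabs_pos (x 0%nat)). pose proof (Rabs_pos (x 1%nat)). lra.
Qed.

Lemma xstar_feasible : feasible example xstar.
Proof. apply example_feasible_iff. unfold wedge, xstar; simpl. lra. Qed.

Theorem mainTheorem6 :
  local_min_on_C example xstar /\
  ~ MPVC_GQN example xstar /\
  MPVC_ACQ example xstar /\
  penalty_exact example xstar.
Proof.
  split; [|split; [|split]].
  - exact (local_min_on_C_of_global_min _ _ xstar_feasible example_fobj_min).
  - exact example_not_GQN.
  - exact example_ACQ.
  - exact (penalty_exact_of_global_min _ _ xstar_feasible example_fobj_min).
Qed.
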